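(* Let $A\in\mathbb{R}^{m\times n}$ be semimonotone ($A^{\dagger}\geq 0$) and let $A=U_1-V_1=U_2-V_2$ be two convergent proper nonnegative splittings of the same type (both of type I or both of type II). If there exists $\alpha$ with $0<\alpha\leq 1$ such that $V_1\leq \alpha V_2$ and $\rho(A^{\dagger}V_i)>0$ for $i=1$ or $i=2$, then $\rho(U_1^{\dagger}V_1)\leq\rho(U_2^{\dagger}V_2)<1$ whenever $\alpha=1$, and $\rho(U_1^{\dagger}V_1)<\rho(U_2^{\dagger}V_2)<1$ whenever $0<\alpha<1$.
   Context: $A^{\dagger}$ denotes the Moore–Penrose inverse and $\rho(\cdot)$ the spectral radius. Inequalities are entrywise. A splitting $A=U-V$ is proper if $R(U)=R(A)$ and $N(U)=N(A)$; it is convergent if $\rho(U^{\dagger}V)<1$. A proper splitting is a proper nonnegative splitting of type I if $U^{\dagger}V\geq 0$, and of type II if $VU^{\dagger}\geq 0$. *)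

From HB Require Import structures.
From mathcomp Require Import all_boot all_order all_algebra.
From mathcomp Require Import complex.
From mathcomp Require Import boolp classical_sets reals.
Set Implicit Arguments. Unset Strict Implicit. Unset Printing Implicit Defensive.
Import Order.TTheory GRing.Theory Num.Theory.
Local Open Scope ring_scope.
Local Open Scope classical_set_scope.

Definition is_MPinv (R : realType) m n (A : 'M[R]_(m, n)) (X : 'M[R]_(n, m)) : Prop :=
  [/\ A *m X *m A = A, X *m A *m X = X, (A *m X)^T = A *m X & (X *m A)^T = X *m A].

Definition complexify (R : realType) n (A : 'M[R]_n) : 'M[R[i]]_n :=
  map_mx (fun x => x%:C%C) A.

Definition spectral_radius (R : realType) n (A : 'M[R]_n) : R :=
  sup [set Normc.normc z | z in [set z : R[i] | eigenvalue (complexify A) z]].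

Definition mx_nonneg (R : realType) m n (A : 'M[R]_(m, n)) : Prop :=
  forall i j, 0 <= A i j.
Definition mx_le (R : realType) m n (A B : 'M[R]_(m, n)) : Prop :=
  forall i j, A i j <= B i j.

Definition same_range (R : realType) m n (A U : 'M[R]_(m, n)) : Prop :=
  forall y : 'cV[R]_m, (exists x, y = A *m x) <-> (exists x, y = U *m x).
Definition same_null (R : realType) m n (A U : 'M[R]_(m, n)) : Prop :=
  forall x : 'cV[R]_n, A *m x = 0 <-> U *m x = 0.

Definition proper_splitting (R : realType) m n (A U V : 'M[R]_(m, n)) : Prop :=
  A = U - V /\ same_range A U /\ same_null A U.

(* Ud is the Moore-Penrose inverse of U. *)
Definition convergent_splitting (R : realType) m n (U V : 'M[R]_(m, n)) (Ud : 'M[R]_(n, m)) :=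
  spectral_radius (Ud *m V) < 1.
Definition type_I (R : realType) m n (U V : 'M[R]_(m, n)) (Ud : 'M[R]_(n, m)) :=
  mx_nonneg (Ud *m V).
Definition type_II (R : realType) m n (U V : 'M[R]_(m, n)) (Ud : 'M[R]_(n, m)) :=
  mx_nonneg (V *m Ud).

(* Write W := U† V and B := A† V for a proper splitting A = U - V.  The range
   and null-space conditions give A A† = U U† and A† A = U† U, whence
   A† V U† = A† - U†, i.e. (1 + B)(1 - W) = 1; the same identity links V U†
   and V A† in the type II case.  When W >= 0 and rho(W) < 1, B = (1 - W)^-1 W
   is nonnegative and rho(W) = rho(B) / (1 + rho(B)).  Since A† >= 0,
   V1 <= a V2 gives 0 <= B1 <= a B2, hence rho(B1) <= a rho(B2), and
   t |-> t / (1 + t) is strictly increasing.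

   Both spectral estimates come from a
   comparison principle: if 0 <= P <= Q and 1 - Q has a nonnegative left
   inverse H, every eigenvalue z of P has |z| < 1, since a left eigenvector v
   with |z| >= 1 would satisfy K |v| <= |v| H for every K.  Conversely, if
   W >= 0 and rho(W) < 1 then (1 - W)^-1 >= 0, because W^K tends to 0; this
   follows from the Cayley-Hamilton factorisation of W over the complex
   numbers. *)

From HB Require Import structures.
From mathcomp Require Import all_boot all_order all_algebra.
From mathcomp Require Import complex.
From mathcomp Require Import boolp classical_sets reals.
From mathcomp Require Import ring lra.
Import Order.TTheory GRing.Theory Num.Theory.
Local Open Scope ring_scope.
Local Open Scope complex_scope.
Set Implicit Arguments. Unset Strict Implicit.

Section ComplexModulus.
Variable R : realType.
Implicit Types (x : R) (z : R[i]).

Lemma real_complex_normc z : (Normc.normc z)%:C = `|z|.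
Proof. by case: z. Qed.

Lemma normc_ge0 z : 0 <= Normc.normc z.
Proof. by rewrite -lecR real_complex_normc normr_ge0. Qed.

Lemma normc_real x : Normc.normc x%:C = `|x|.
Proof. by rewrite /= expr0n addr0 sqrtr_sqr. Qed.

Lemma norm_real_complex x : `|x%:C| = `|x|%:C :> R[i].
Proof. by rewrite -real_complex_normc normc_real. Qed.

End ComplexModulus.

Section SpectralRadius.
Variables (R : realType) (k : nat).
Implicit Types (X : 'M[R]_k) (z : R[i]).

Lemma norm_eigen_le_sum_norm X z :
  eigenvalue (complexify X) z -> `|z| <= (\sum_i \sum_j `|X i j|)%:C.
Proof.
move=> /eigenvalueP [v Hv vn0].
pose S : R[i] := \sum_j `|v 0 j|.
have S_gt0 : 0 < S.
  rewrite lt_def sumr_ge0 // andbT; apply: contra vn0.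
  rewrite psumr_eq0 // => /allP v0; apply/eqP/rowP => j.
  by rewrite mxE; apply/eqP; rewrite -normr_eq0; exact: v0 (mem_index_enum j).
have col_bound j : `|z| * `|v 0 j| <= S * (\sum_l `|X l j|)%:C.
  rewrite -normrM; have /matrixP/(_ 0 j) := Hv; rewrite !mxE => <-.
  rewrite rmorph_sum mulr_suml; apply: le_trans (ler_norm_sum _ _ _) _.
  apply: ler_sum => l _; rewrite !mxE normrM norm_real_complex ler_wpM2l //.
  by rewrite (bigD1 l) //= lerDl sumr_ge0 // => i _; rewrite lecR.
have : `|z| * S <= S * (\sum_i \sum_j `|X i j|)%:C.
  rewrite /S mulr_sumr; apply: le_trans (ler_sum _ (fun j _ => col_bound j)) _.
  by rewrite -mulr_sumr -rmorph_sum exchange_big.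
by rewrite mulrC ler_pM2l.
Qed.

Lemma norm_eigen_le_spectral_radius X z :
  eigenvalue (complexify X) z -> `|z| <= (spectral_radius X)%:C.
Proof.
move=> Xz; rewrite -real_complex_normc lecR; apply: ub_le_sup; last by exists z.
exists (\sum_i \sum_j `|X i j|) => _ [w Xw <-].
by rewrite -lecR real_complex_normc; apply: norm_eigen_le_sum_norm.
Qed.

Let spectral_radius_no_eigenvalue X :
  ~ (exists z, eigenvalue (complexify X) z) -> spectral_radius X = 0.
Proof.
move=> noeig; rewrite /spectral_radius.
suff -> : [set z : R[i] | eigenvalue (complexify X) z]%classic = set0.
  by rewrite image_set0 sup0.
by apply/seteqP; split=> // z Xz; apply: noeig; exists z.
Qed.

Lemma spectral_radius_ge0 X : 0 <= spectral_radius X.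
Proof.
have [[z Xz]|/spectral_radius_no_eigenvalue -> //] :=
  pselect (exists z, eigenvalue (complexify X) z).
rewrite -lecR; exact: le_trans (normr_ge0 z) (norm_eigen_le_spectral_radius Xz).
Qed.

Lemma spectral_radius_le X s :
  (forall z, eigenvalue (complexify X) z -> `|z| <= s%:C) -> 0 <= s ->
  spectral_radius X <= s.
Proof.
move=> Xs s_ge0.
have [[z Xz]|/spectral_radius_no_eigenvalue -> //] :=
  pselect (exists z, eigenvalue (complexify X) z).
apply: ge_sup; first by exists (Normc.normc z), z.
by move=> _ [w Xw <-]; rewrite -lecR real_complex_normc Xs.
Qed.

Lemma eigenvalue_complexifyZ X c z :
  eigenvalue (complexify X) z -> eigenvalue (complexify (c *: X)) (c%:C * z).
Proof.
move=> /eigenvalueP [v Hv vn0]; apply/eigenvalueP; exists v => //.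
by rewrite /complexify map_mxZ -/(complexify X) -scalemxAr Hv scalerA.
Qed.

Lemma spectral_radiusZ_le X c :
  0 < c -> spectral_radius (c *: X) <= c * spectral_radius X.
Proof.
move=> c_gt0; apply: spectral_radius_le => [z|]; last first.
  by rewrite mulr_ge0 ?spectral_radius_ge0 ?ltW.
move=> /(eigenvalue_complexifyZ c^-1); rewrite scalerA mulVf ?gt_eqF // scale1r.
move/norm_eigen_le_spectral_radius.
rewrite normrM norm_real_complex normfV (gtr0_norm c_gt0) fmorphV.
by rewrite ler_pdivrMl ?ltcR // rmorphM.
Qed.

Lemma unitmx_1B_of_spectral_radius_lt1 X :
  spectral_radius X < 1 -> (1%:M - X) \in unitmx.
Proof.
move=> X_lt1; rewrite unitmxE unitfE; apply/negP => /det0P [v vn0 /eqP].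
rewrite mulmxBr mulmx1 subr_eq0 => /eqP vX.
have : eigenvalue (complexify X) 1.
  apply/eigenvalueP; exists (map_mx (real_complex R) v); last by rewrite map_mx_eq0.
  by rewrite scale1r /complexify -map_mxM -vX.
move/norm_eigen_le_spectral_radius.
by rewrite normr1 -(rmorph1 (real_complex R)) lecR leNgt X_lt1.
Qed.

End SpectralRadius.

Lemma spectral_radius_mulmxC (R : realType) p q (X : 'M[R]_(p, q)) (Y : 'M[R]_(q, p)) :
  spectral_radius (X *m Y) = spectral_radius (Y *m X).
Proof.
suff le_XY p' q' (X' : 'M[R]_(p', q')) Y' :
    spectral_radius (X' *m Y') <= spectral_radius (Y' *m X').
  by apply/eqP; rewrite eq_le !le_XY.
apply: spectral_radius_le (spectral_radius_ge0 _) => z /eigenvalueP [v Hv vn0].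
have [->|z_neq0] := eqVneq z 0; first by rewrite normr0 lecR spectral_radius_ge0.
pose Xc := map_mx (real_complex R) X'; pose Yc := map_mx (real_complex R) Y'.
have vXY : v *m Xc *m Yc = z *: v by rewrite -mulmxA -map_mxM.
apply/norm_eigen_le_spectral_radius/eigenvalueP; exists (v *m Xc).
  by rewrite /complexify map_mxM -/Xc -/Yc mulmxA vXY scalemxAl.
apply: contra vn0 => /eqP vX0.
by move: vXY; rewrite vX0 mul0mx => /esym/eqP; rewrite scaler_eq0 (negbTE z_neq0).
Qed.

Section NonnegativeMatrices.
Variable R : realType.

Lemma mx_nonneg_mul m n p (A : 'M[R]_(m, n)) (B : 'M[R]_(n, p)) :
  mx_nonneg A -> mx_nonneg B -> mx_nonneg (A *m B).
Proof. by move=> A_ge0 B_ge0 i j; rewrite mxE sumr_ge0 // => l _; rewrite mulr_ge0. Qed.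

Lemma mx_nonnegD m n (A B : 'M[R]_(m, n)) :
  mx_nonneg A -> mx_nonneg B -> mx_nonneg (A + B).
Proof. by move=> A_ge0 B_ge0 i j; rewrite mxE addr_ge0. Qed.

Lemma mx_nonnegZ m n c (A : 'M[R]_(m, n)) :
  0 <= c -> mx_nonneg A -> mx_nonneg (c *: A).
Proof. by move=> c_ge0 A_ge0 i j; rewrite mxE mulr_ge0. Qed.

Lemma mx_nonneg1 k : mx_nonneg (1%:M : 'M[R]_k).
Proof. by move=> i j; rewrite mxE ler0n. Qed.

Lemma mx_nonnegX k (A : 'M[R]_k) K : mx_nonneg A -> mx_nonneg (A ^+ K).
Proof.
move=> A_ge0; elim: K => [|K IH]; first by rewrite expr0 -idmxE; exact: mx_nonneg1.
by rewrite exprS -mulmxE; exact: mx_nonneg_mul.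
Qed.

Lemma mx_le_refl m n (A : 'M[R]_(m, n)) : mx_le A A.
Proof. by []. Qed.

Lemma mx_le_mul m n p (A A' : 'M[R]_(m, n)) (B B' : 'M[R]_(n, p)) :
  mx_nonneg A -> mx_le A A' -> mx_nonneg B -> mx_le B B' -> mx_le (A *m B) (A' *m B').
Proof.
by move=> A_ge0 AA' B_ge0 BB' i j; rewrite !mxE ler_sum // => l _; rewrite ler_pM.
Qed.

Lemma mx_le_mull m n p (A : 'M[R]_(m, n)) (B B' : 'M[R]_(n, p)) :
  mx_nonneg A -> mx_le B B' -> mx_le (A *m B) (A *m B').
Proof. by move=> A_ge0 BB' i j; rewrite !mxE ler_sum // => l _; rewrite ler_wpM2l. Qed.

Lemma mx_le_mulr m n p (A A' : 'M[R]_(m, n)) (B : 'M[R]_(n, p)) :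
  mx_nonneg B -> mx_le A A' -> mx_le (A *m B) (A' *m B).
Proof. by move=> B_ge0 AA' i j; rewrite !mxE ler_sum // => l _; rewrite ler_wpM2r. Qed.

Lemma mx_leX k (A B : 'M[R]_k) K : mx_nonneg A -> mx_le A B -> mx_le (A ^+ K) (B ^+ K).
Proof.
move=> A_ge0 AB; elim: K => [|K IH]; first by rewrite !expr0.
by rewrite !exprS -!mulmxE; apply: mx_le_mul => //; exact: mx_nonnegX.
Qed.

End NonnegativeMatrices.

Section EventuallySmall.
Variable R : realType.

Definition eventually_small (x : nat -> R) :=
  forall e, 0 < e -> exists N, forall K, (N <= K)%N -> x K <= e.

Lemma geometric_mul_le1 (q : R) n : 0 <= q <= 1 -> n%:R * (1 - q) * q ^+ n <= 1.
Proof.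
move=> /andP [q_ge0 q_le1].
have sum_ge : n%:R * q ^+ n <= \sum_(i < n) q ^+ i.
  rewrite mulr_natl -[n in _ *+ n](card_ord n) -sumr_const ler_sum // => i _.
  by rewrite ler_wiXn2l // ltnW.
have : (1 - q) * \sum_(i < n) q ^+ i = 1 - q ^+ n.
  by rewrite -[RHS]opprB subrX1 -mulNr opprB.
have := exprn_ge0 n q_ge0; have : 0 <= 1 - q by rewrite subr_ge0.
nra.
Qed.

Lemma eventually_small_geometric (q c : R) :
  0 <= q < 1 -> 0 <= c -> eventually_small (fun j => q ^+ j * c).
Proof.
move=> /andP [q_ge0 q_lt1] c_ge0 e e_gt0.
have d_gt0 : 0 < e * (1 - q) by rewrite mulr_gt0 // subr_gt0.
have bound_ge0 : 0 <= c / (e * (1 - q)) by rewrite divr_ge0 // ltW.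
exists (Num.Def.archi_bound (c / (e * (1 - q)))) => j Jj.
have : c < j%:R * (e * (1 - q)).
  rewrite -ltr_pdivrMr //; apply: lt_le_trans (archi_boundP bound_ge0) _.
  by rewrite ler_nat.
move=> /ltW c_le; apply: le_trans (ler_wpM2l (exprn_ge0 j q_ge0) c_le) _.
have -> : q ^+ j * (j%:R * (e * (1 - q))) = e * (j%:R * (1 - q) * q ^+ j) by ring.
rewrite -[leRHS]mulr1; apply: ler_wpM2l; first exact: ltW.
by apply: (@geometric_mul_le1 q j); rewrite q_ge0 ltW.
Qed.

Lemma eventually_small_rec (q : R) (x y : nat -> R) :
  0 <= q < 1 -> (forall K, 0 <= x K) -> eventually_small y ->
  (forall K, x K.+1 <= y K + q * x K) -> eventually_small x.
Proof.
move=> /andP [q_ge0 q_lt1] x_ge0 y_small x_rec e e_gt0.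
have d_gt0 : 0 < e * (1 - q) / 2 by rewrite divr_gt0 // mulr_gt0 // subr_gt0.
have [N yN] := y_small _ d_gt0.
have x_after j : x (N + j)%N <= e / 2 + q ^+ j * x N.
  elim: j => [|j IH]; first by rewrite addn0 expr0 mul1r lerDr divr_ge0 // ltW.
  have := x_rec (N + j)%N; have := yN (N + j)%N (leq_addr _ _).
  have := ler_wpM2l q_ge0 IH; rewrite addnS exprSr; lra.
have e2_gt0 : 0 < e / 2 by rewrite divr_gt0.
have [J xJ] :=
  eventually_small_geometric (introT andP (conj q_ge0 q_lt1)) (x_ge0 N) e2_gt0.
exists (N + J)%N => K NJK.
have NK : (N <= K)%N by exact: leq_trans (leq_addr J N) NJK.
have JKN : (J <= K - N)%N by rewrite leq_subRL // addnC.
have := x_after (K - N)%N; rewrite subnKC //; have := xJ _ JKN; lra.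
Qed.

End EventuallySmall.

Section MatrixPowers.
Variable R : realType.

Definition mx_abs_sum m n (U : 'M[R[i]]_(m, n)) : R := \sum_i \sum_j Normc.normc (U i j).

Lemma mx_abs_sum_ge0 m n (U : 'M[R[i]]_(m, n)) : 0 <= mx_abs_sum U.
Proof. by rewrite sumr_ge0 // => i _; rewrite sumr_ge0 // => j _; exact: normc_ge0. Qed.

Lemma mx_abs_sumD m n (U V : 'M[R[i]]_(m, n)) :
  mx_abs_sum (U + V) <= mx_abs_sum U + mx_abs_sum V.
Proof.
rewrite -big_split ler_sum // => i _; rewrite -big_split ler_sum // => j _.
by rewrite mxE le_normcD.
Qed.

Lemma mx_abs_sumZ m n c (U : 'M[R[i]]_(m, n)) :
  mx_abs_sum (c *: U) = Normc.normc c * mx_abs_sum U.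
Proof.
rewrite /mx_abs_sum mulr_sumr; apply: eq_bigr => i _; rewrite mulr_sumr.
by apply: eq_bigr => j _; rewrite mxE Normc.normcM.
Qed.

Lemma mx_abs_sum_entry m n (U : 'M[R[i]]_(m, n)) i j :
  Normc.normc (U i j) <= mx_abs_sum U.
Proof.
rewrite /mx_abs_sum (bigD1 i) //= (bigD1 j) //= -addrA lerDl addr_ge0 //.
  by rewrite sumr_ge0 // => l _; exact: normc_ge0.
by rewrite sumr_ge0 // => l _; rewrite sumr_ge0 // => l' _; exact: normc_ge0.
Qed.

Lemma eventually_small_annihilated_powers m k (M : 'M[R[i]]_k) (q : R) (rs : seq R[i]) :
  0 <= q < 1 -> (forall z, z \in rs -> Normc.normc z <= q) ->
  forall U : 'M[R[i]]_(m, k), U *m \prod_(z <- rs) (M - z%:M) = 0 ->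
  eventually_small (fun K => mx_abs_sum (U *m M ^+ K)).
Proof.
move=> q01; elim: rs => [|z rs IH] rs_le U.
  rewrite big_nil -idmxE mulmx1 => -> e e_gt0; exists 0%N => K _.
  rewrite mul0mx /mx_abs_sum big1 ?ltW // => i _.
  by rewrite big1 // => j _; rewrite mxE Normc.normc0.
rewrite big_cons -mulmxE mulmxA => UM0.
have rs_le' w : w \in rs -> Normc.normc w <= q.
  by move=> w_rs; apply: rs_le; rewrite inE w_rs orbT.
apply: (eventually_small_rec q01 (fun K => mx_abs_sum_ge0 _) (IH rs_le' _ UM0)) => K.
have -> : U *m M ^+ K.+1 = U *m (M - z%:M) *m M ^+ K + z *: (U *m M ^+ K).
  by rewrite exprS -mulmxE !mulmxA scalemxAl -mulmxDl mulmxBr mul_mx_scalar subrK.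
apply: le_trans (mx_abs_sumD _ _) _; rewrite mx_abs_sumZ lerD2l.
by rewrite ler_wpM2r ?mx_abs_sum_ge0 // rs_le ?mem_head.
Qed.

End MatrixPowers.

Lemma powers_small_of_spectral_radius_lt1 (R : realType) k (Y : 'M[R]_k) :
  spectral_radius Y < 1 -> forall e, 0 < e -> exists K, forall i j, `|(Y ^+ K) i j| <= e.
Proof.
case: k Y => [|k] Y Y_lt1 e e_gt0; first by exists 0%N => [[]].
pose M := complexify Y.
have [rs char_factor] := closed_field_poly_normal (char_poly M).
rewrite (monicP (char_poly_monic M)) scale1r in char_factor.
have M_annihilated : (1%:M : 'M_k.+1) *m \prod_(z <- rs) (M - z%:M) = 0.
  rewrite mul1mx -(Cayley_Hamilton M) char_factor rmorph_prod; apply: eq_bigr => z _.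
  by rewrite rmorphB /= horner_mx_X horner_mx_C.
have rs_le z : z \in rs -> Normc.normc z <= spectral_radius Y.
  move=> z_rs; rewrite -lecR real_complex_normc; apply: norm_eigen_le_spectral_radius.
  by rewrite eigenvalue_root_char -/M char_factor root_prod_XsubC.
have rho01 : 0 <= spectral_radius Y < 1 by rewrite spectral_radius_ge0 Y_lt1.
have [K MK] := eventually_small_annihilated_powers rho01 rs_le M_annihilated e_gt0.
exists K => i j; apply: le_trans (MK K (leqnn K)).
rewrite mul1mx; apply: le_trans (mx_abs_sum_entry _ i j).
by rewrite /M /complexify -rmorphXn mxE normc_real.
Qed.

Lemma norm_mulmx_complexify_le (R : realType) m n
    (w : 'rV[R[i]]_m) (M : 'M[R]_(m, n)) j :
  mx_nonneg M ->
  `|(w *m map_mx (real_complex R) M) 0 j| <= ((\row_l Normc.normc (w 0 l) *m M) 0 j)%:C.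
Proof.
move=> M_ge0; rewrite !mxE rmorph_sum; apply: le_trans (ler_norm_sum _ _ _) _.
apply: ler_sum => l _; rewrite !mxE normrM rmorphM /= norm_real_complex.
by rewrite (ger0_norm (M_ge0 l j)) real_complex_normc.
Qed.

Section NeumannSeries.
Variables (R : realType) (k : nat).
Implicit Types (P Q W X H G B : 'M[R]_k).

Lemma neumann_partial_sum H Q K :
  H *m (1%:M - Q) = 1%:M -> H = \sum_(i < K) Q ^+ i + H *m Q ^+ K.
Proof.
move=> HQ; elim: K => [|K IH]; first by rewrite big_ord0 add0r expr0 -idmxE mulmx1.
have H_fix : H = 1%:M + H *m Q by rewrite -{1}HQ mulmxBr mulmx1 subrK.
rewrite big_ord_recr /= -addrA {1}IH; congr (_ + _).
by rewrite {1}H_fix mulmxDl mul1mx exprS -mulmxE mulmxA.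
Qed.

Lemma neumann_partial_sum_le H Q K :
  mx_nonneg Q -> mx_nonneg H -> H *m (1%:M - Q) = 1%:M ->
  mx_le (\sum_(i < K) Q ^+ i) H.
Proof.
move=> Q_ge0 H_ge0 HQ i j; rewrite {1}(neumann_partial_sum K HQ) [leRHS]mxE lerDl.
by apply: mx_nonneg_mul => //; exact: mx_nonnegX.
Qed.

Lemma inverse_nonneg_of_spectral_radius_lt1 W G :
  mx_nonneg W -> spectral_radius W < 1 -> G *m (1%:M - W) = 1%:M -> mx_nonneg G.
Proof.
move=> W_ge0 W_lt1 GW i j; apply/ler_addgt0Pr => e e_gt0.
pose S := \sum_l `|G i l| + 1.
have S_gt0 : 0 < S by rewrite ltr_pwDr // sumr_ge0.
have [K WK] := powers_small_of_spectral_radius_lt1 W_lt1 (divr_gt0 e_gt0 S_gt0).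
have tail_small : `|(G *m W ^+ K) i j| <= e.
  rewrite mxE; apply: le_trans (ler_norm_sum _ _ _) _.
  apply: (@le_trans _ _ (\sum_l `|G i l| * (e / S))).
    by apply: ler_sum => l _; rewrite normrM ler_wpM2l.
  by rewrite -mulr_suml mulrA ler_pdivrMr // mulrC ler_wpM2l ?(ltW e_gt0) // lerDl.
have head_ge0 : 0 <= (\sum_(l < K) W ^+ l) i j.
  by rewrite summxE sumr_ge0 // => l _; exact: mx_nonnegX.
have -> : G i j = (\sum_(l < K) W ^+ l) i j + (G *m W ^+ K) i j.
  by rewrite {1}(neumann_partial_sum K GW) mxE.
move: tail_small; rewrite ler_norml => /andP [tail_ge _]; lra.
Qed.

Lemma norm_eigen_lt1_of_le P Q H :
  mx_nonneg P -> mx_le P Q -> mx_nonneg H -> H *m (1%:M - Q) = 1%:M ->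
  forall z, eigenvalue (complexify P) z -> `|z| < 1.
Proof.
move=> P_ge0 PQ H_ge0 HQ z /eigenvalueP [v vP vn0].
rewrite -real_complex_normc -(rmorph1 (real_complex R)) ltcR ltNge; apply/negP.
rewrite -lecR rmorph1 real_complex_normc => z_ge1.
have Q_ge0 : mx_nonneg Q by move=> i j; exact: le_trans (P_ge0 i j) (PQ i j).
pose a := \row_l Normc.normc (v 0 l).
have a_ge0 : mx_nonneg a by move=> i l; rewrite mxE normc_ge0.
have vPK K : v *m complexify P ^+ K = z ^+ K *: v.
  elim: K => [|K IH]; first by rewrite !expr0 -idmxE mulmx1 scale1r.
  by rewrite exprSr -mulmxE mulmxA IH -scalemxAl vP scalerA -exprSr.
have a_le K j : a 0 j <= (a *m Q ^+ K) 0 j.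
  have PK_ge0 := mx_nonnegX K P_ge0.
  apply: le_trans (mx_le_mul a_ge0 (mx_le_refl a) PK_ge0 (mx_leX K P_ge0 PQ) 0 j).
  rewrite -lecR; apply: le_trans (norm_mulmx_complexify_le v j PK_ge0).
  rewrite rmorphXn -/(complexify P) vPK !mxE normrM normrX real_complex_normc ler_peMl //.
  exact: exprn_ege1.
have Ka_le K j : K%:R * a 0 j <= (a *m H) 0 j.
  apply: le_trans (mx_le_mull a_ge0 (neumann_partial_sum_le K Q_ge0 H_ge0 HQ) 0 j).
  rewrite mulmx_sumr summxE mulr_natl -[in X in X <= _](card_ord K) -sumr_const.
  exact: ler_sum.
have /rV0Pn [j vj] := vn0.
have aj_gt0 : 0 < a 0 j.
  by rewrite mxE lt_def normc_ge0 andbT; apply: contra vj => /eqP/Normc.eq0_normc ->.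
have ratio_ge0 : 0 <= (a *m H) 0 j / a 0 j.
  by rewrite divr_ge0 ?(ltW aj_gt0) //; exact: mx_nonneg_mul a_ge0 H_ge0 0 j.
have := Ka_le (Num.Def.archi_bound ((a *m H) 0 j / a 0 j)) j.
by rewrite -ler_pdivlMr // leNgt archi_boundP.
Qed.

Lemma spectral_radius_le_of_scaled_le X Q H (t : R) :
  0 < t -> mx_nonneg X -> mx_le (t^-1 *: X) Q ->
  mx_nonneg H -> H *m (1%:M - Q) = 1%:M -> spectral_radius X <= t.
Proof.
move=> t_gt0 X_ge0 XQ H_ge0 HQ; apply: spectral_radius_le (ltW t_gt0) => z.
have Xt_ge0 : mx_nonneg (t^-1 *: X) by apply: mx_nonnegZ; rewrite ?invr_ge0 ?ltW.
move=> /(eigenvalue_complexifyZ t^-1) /(norm_eigen_lt1_of_le Xt_ge0 XQ H_ge0 HQ).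
rewrite normrM norm_real_complex normfV (gtr0_norm t_gt0) fmorphV ltr_pdivrMl ?ltcR //.
by rewrite mulr1 => /ltW.
Qed.

Lemma spectral_radius_le_scale_of_le B1 B2 (a : R) :
  0 < a -> mx_nonneg B1 -> mx_le B1 (a *: B2) ->
  spectral_radius B1 <= a * spectral_radius B2.
Proof.
move=> a_gt0 B1_ge0 B12; apply/ler_addgt0Pr => e e_gt0.
set t := a * spectral_radius B2 + e.
have t_gt0 : 0 < t by rewrite ltr_pwDr // mulr_ge0 ?spectral_radius_ge0 ?ltW.
have B2_ge0 : mx_nonneg B2.
  by move=> i j; have := le_trans (B1_ge0 i j) (B12 i j); rewrite mxE pmulr_rge0.
pose Q := (a / t) *: B2.
have Q_ge0 : mx_nonneg Q by apply: mx_nonnegZ; rewrite ?divr_ge0 ?ltW.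
have Q_lt1 : spectral_radius Q < 1.
  apply: le_lt_trans (spectral_radiusZ_le _ (divr_gt0 a_gt0 t_gt0)) _.
  by rewrite mulrAC ltr_pdivrMr // mul1r ltrDl.
have HQ := mulVmx (unitmx_1B_of_spectral_radius_lt1 Q_lt1).
have H_ge0 := inverse_nonneg_of_spectral_radius_lt1 Q_ge0 Q_lt1 HQ.
apply: (spectral_radius_le_of_scaled_le t_gt0 B1_ge0 _ H_ge0 HQ) => i j.
rewrite !mxE mulrC mulrAC ler_wpM2r ?invr_ge0 ?(ltW t_gt0) //.
by have := B12 i j; rewrite mxE.
Qed.

End NeumannSeries.

Lemma ler_div1D (R : realFieldType) (x y : R) :
  0 <= x -> 0 <= y -> (x / (1 + x) <= y / (1 + y)) = (x <= y).
Proof.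
move=> x_ge0 y_ge0; rewrite ler_pdivrMr ?ltr_pwDl // mulrAC ler_pdivlMr ?ltr_pwDl //.
by rewrite !mulrDr !mulr1 [y * x]mulrC lerD2r.
Qed.

Lemma ltr_div1D (R : realFieldType) (x y : R) :
  0 <= x -> 0 <= y -> (x / (1 + x) < y / (1 + y)) = (x < y).
Proof. by move=> x_ge0 y_ge0; rewrite !ltNge ler_div1D. Qed.

Section NeumannPair.
Variables (R : realType) (k : nat) (W B : 'M[R]_k).
Hypothesis WB : (1%:M + B) *m (1%:M - W) = 1%:M.

Lemma neumann_pairE : (1%:M + B) *m W = B.
Proof. by move/eqP: WB; rewrite mulmxBr mulmx1 subr_eq => /eqP/addrI/esym. Qed.

Hypotheses (W_ge0 : mx_nonneg W) (W_lt1 : spectral_radius W < 1).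

Lemma neumann_pair_nonneg : mx_nonneg B.
Proof.
rewrite -neumann_pairE; apply: mx_nonneg_mul => //.
exact: inverse_nonneg_of_spectral_radius_lt1 W_ge0 W_lt1 WB.
Qed.

Lemma spectral_radius_neumann_pair_lb :
  spectral_radius B / (1 + spectral_radius B) <= spectral_radius W.
Proof.
set r := spectral_radius W; set b := spectral_radius B.
have r_ge0 : 0 <= r := spectral_radius_ge0 W.
have r1_gt0 : 0 < 1 - r by rewrite subr_gt0.
have b_le : b <= r / (1 - r).
  apply: spectral_radius_le; last by rewrite divr_ge0 // ltW.
  move=> mu /eigenvalueP [v vB vn0].
  have WBc : (1%:M + complexify B) *m (1%:M - complexify W) = 1%:M.
    have := congr1 (map_mx (real_complex R)) WB.
    by rewrite map_mxM map_mxD map_mxB !map_mx1.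
  have v_eq : v = (1 + mu) *: (v - v *m complexify W).
    rewrite -[v in LHS](mulmx1 v) -WBc mulmxA (mulmxDr v 1%:M) mulmx1 vB.
    by rewrite -{1}(scale1r v) -scalerDl -scalemxAl mulmxBr mulmx1.
  have mu1_neq0 : 1 + mu != 0.
    by apply: contra vn0 => /eqP mu1; rewrite v_eq mu1 scale0r.
  (* mu / (1 + mu) is an eigenvalue of W, with the same left eigenvector *)
  pose lam := 1 - (1 + mu)^-1.
  have W_lam : eigenvalue (complexify W) lam.
    apply/eigenvalueP; exists v => //.
    have -> : v *m complexify W = v - (1 + mu)^-1 *: v.
      by rewrite {3}v_eq scalerA mulVf // scale1r opprB addrC subrK.
    by rewrite /lam scalerBl scale1r.
  have lam_le : Normc.normc lam <= r.
    by rewrite -lecR real_complex_normc; exact: norm_eigen_le_spectral_radius.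
  have mu_lam : Normc.normc mu * Normc.normc (1 - lam) = Normc.normc lam.
    by rewrite -Normc.normcM; congr Normc.normc; rewrite /lam; field.
  have lam_tri : 1 <= Normc.normc (1 - lam) + Normc.normc lam.
    by rewrite -(Normc.normc1 R) -{1}(subrK lam 1); exact: le_normcD.
  have := normc_ge0 mu; rewrite -real_complex_normc lecR ler_pdivlMr //; nra.
have b1_gt0 : 0 < 1 + b.
  by apply: lt_le_trans ltr01 _; rewrite lerDl spectral_radius_ge0.
by move: b_le; rewrite ler_pdivrMr // ler_pdivlMr //; lra.
Qed.

Lemma spectral_radius_neumann_pair_ub :
  spectral_radius W <= spectral_radius B / (1 + spectral_radius B).
Proof.
set b := spectral_radius B; have b_ge0 : 0 <= b := spectral_radius_ge0 B.
apply/ler_addgt0Pr => e e_gt0; set s := b / (1 + b) + e.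
have [s_ge1|s_lt1] := leP 1 s; first exact: le_trans (ltW W_lt1) s_ge1.
have b1_gt0 : 0 < 1 + b by apply: lt_le_trans ltr01 _; rewrite lerDl.
have s_gt0 : 0 < s by apply: lt_le_trans e_gt0 _; rewrite lerDr divr_ge0 // addr_ge0.
(* c is chosen so that (1 + B)(1 - s^-1 W) = 1 - c B, and c rho(B) < 1 is
   equivalent to rho(B) / (1 + rho(B)) < s. *)
pose c := (1 - s) / s.
have c_gt0 : 0 < c by rewrite divr_gt0 // subr_gt0.
have C_lt1 : spectral_radius (c *: B) < 1.
  apply: le_lt_trans (spectral_radiusZ_le B c_gt0) _.
  have bs : b < s * (1 + b) by rewrite -ltr_pdivrMr // ltrDl.
  by rewrite -/b /c mulrAC ltr_pdivrMr // mul1r; lra.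
have C_ge0 : mx_nonneg (c *: B) by apply: mx_nonnegZ (ltW c_gt0) neumann_pair_nonneg.
pose G := invmx (1%:M - c *: B) *m (1%:M + B).
have HC := mulVmx (unitmx_1B_of_spectral_radius_lt1 C_lt1).
have GW : G *m (1%:M - s^-1 *: W) = 1%:M.
  rewrite -[RHS]HC -mulmxA; congr (_ *m _).
  rewrite mulmxBr mulmx1 -scalemxAr neumann_pairE -addrA; congr (_ + _).
  rewrite -{1}(scale1r B) -scalerBl -scaleNr; congr (_ *: _).
  by rewrite /c; field; exact: lt0r_neq0.
have G_ge0 : mx_nonneg G.
  apply: mx_nonneg_mul; last exact: mx_nonnegD (@mx_nonneg1 R k) neumann_pair_nonneg.
  exact: inverse_nonneg_of_spectral_radius_lt1 C_ge0 C_lt1 HC.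
exact: spectral_radius_le_of_scaled_le s_gt0 W_ge0 (mx_le_refl _) G_ge0 GW.
Qed.

Lemma spectral_radius_neumann_pair :
  spectral_radius W = spectral_radius B / (1 + spectral_radius B).
Proof.
by apply/le_anti; rewrite spectral_radius_neumann_pair_ub spectral_radius_neumann_pair_lb.
Qed.

End NeumannPair.

Lemma eq_mulmx_cV (R : realType) m n (M N : 'M[R]_(m, n)) :
  (forall x : 'cV_n, M *m x = N *m x) -> M = N.
Proof.
move=> MN; apply/matrixP => i j.
by have /matrixP/(_ i 0) := MN (delta_mx j 0); rewrite -!colE !mxE.
Qed.

Section ProperSplitting.
Variables (R : realType) (m n : nat).
Variables (A U V : 'M[R]_(m, n)) (Ad Ud : 'M[R]_(n, m)).
Hypotheses (HA : is_MPinv A Ad) (HU : is_MPinv U Ud).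

Lemma MPinv_mulmx_same_range : same_range A U -> A *m Ad = U *m Ud.
Proof.
case: HA HU => [A1 _ A3 _] [U1 _ U3 _] AU.
have AAdU : A *m Ad *m U = U.
  apply: eq_mulmx_cV => x; have [y Uxy] := (AU (U *m x)).2 (ex_intro _ x erefl).
  by rewrite -mulmxA Uxy mulmxA A1.
have UUdA : U *m Ud *m A = A.
  apply: eq_mulmx_cV => x; have [y Axy] := (AU (A *m x)).1 (ex_intro _ x erefl).
  by rewrite -mulmxA Axy mulmxA U1.
have -> : A *m Ad = U *m Ud *m (A *m Ad) by rewrite mulmxA UUdA.
by apply: trmx_inj; rewrite trmx_mul A3 U3 mulmxA AAdU.
Qed.

Lemma MPinv_mulmx_same_null : same_null A U -> Ad *m A = Ud *m U.
Proof.
case: HA HU => [A1 _ _ A4] [U1 _ _ U4] AU.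
have UAdA : U *m (Ad *m A) = U.
  apply: eq_mulmx_cV => x; apply/eqP; rewrite -mulmxA -subr_eq0 -mulmxBr.
  by apply/eqP/AU; rewrite mulmxBr !mulmxA A1 subrr.
have AUdU : A *m (Ud *m U) = A.
  apply: eq_mulmx_cV => x; apply/eqP; rewrite -mulmxA -subr_eq0 -mulmxBr.
  by apply/eqP/AU; rewrite mulmxBr !mulmxA U1 subrr.
have -> : Ad *m A = Ad *m A *m (Ud *m U) by rewrite -mulmxA AUdU.
by apply: trmx_inj; rewrite trmx_mul A4 U4 -mulmxA UAdA.
Qed.

Hypothesis AUV : proper_splitting A U V.

Lemma proper_splitting_pinvE : Ad *m V *m Ud = Ad - Ud.
Proof.
case: AUV => AUV_eq [AU_range AU_null].
have [_ A2 _ _] := HA; have [_ U2 _ _] := HU.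
have -> : V = U - A by rewrite AUV_eq opprB addrC subrK.
rewrite mulmxBr mulmxBl -mulmxA -(MPinv_mulmx_same_range AU_range) mulmxA A2.
by rewrite (MPinv_mulmx_same_null AU_null) U2.
Qed.

Lemma proper_splitting_neumann_l : (1%:M + Ad *m V) *m (1%:M - Ud *m V) = 1%:M.
Proof.
rewrite mulmxBr mulmx1 mulmxDl mul1mx mulmxA proper_splitting_pinvE mulmxBl.
by rewrite [Ud *m V + _]addrC subrK addrK.
Qed.

Lemma proper_splitting_neumann_r : (1%:M + V *m Ad) *m (1%:M - V *m Ud) = 1%:M.
Proof.
rewrite mulmxBr mulmx1 mulmxDl mul1mx -mulmxA (mulmxA Ad) proper_splitting_pinvE.
by rewrite mulmxBr [V *m Ud + _]addrC subrK addrK.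
Qed.

End ProperSplitting.

Lemma neumann_pairs_compare (R : realType) k (W1 W2 B1 B2 : 'M[R]_k) (a : R) :
  mx_nonneg W1 -> mx_nonneg W2 ->
  spectral_radius W1 < 1 -> spectral_radius W2 < 1 ->
  (1%:M + B1) *m (1%:M - W1) = 1%:M -> (1%:M + B2) *m (1%:M - W2) = 1%:M ->
  0 < a -> a <= 1 -> mx_le B1 (a *: B2) ->
  0 < spectral_radius B1 \/ 0 < spectral_radius B2 ->
  spectral_radius W1 <= spectral_radius W2 /\
  (a < 1 -> spectral_radius W1 < spectral_radius W2).
Proof.
move=> W1_ge0 W2_ge0 W1_lt1 W2_lt1 WB1 WB2 a_gt0 a_le1 B12 B_pos.
rewrite (spectral_radius_neumann_pair WB1 W1_ge0 W1_lt1).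
rewrite (spectral_radius_neumann_pair WB2 W2_ge0 W2_lt1).
have b1_ge0 := spectral_radius_ge0 B1; have b2_ge0 := spectral_radius_ge0 B2.
have b12 : spectral_radius B1 <= a * spectral_radius B2.
  exact: spectral_radius_le_scale_of_le a_gt0 (neumann_pair_nonneg WB1 W1_ge0 W1_lt1) B12.
split=> [|a_lt1].
  rewrite (ler_div1D b1_ge0 b2_ge0); apply: le_trans b12 _; exact: ler_piMl.
have b2_gt0 : 0 < spectral_radius B2.
  case: B_pos => [b1_gt0|//].
  by rewrite -(pmulr_rgt0 _ a_gt0); exact: lt_le_trans b1_gt0 b12.
rewrite (ltr_div1D b1_ge0 b2_ge0); apply: le_lt_trans b12 _.
by rewrite (gtr_pMl _ b2_gt0).
Qed.

Unset Implicit Arguments.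

Theorem theorem4p4 (R : realType) (m n : nat)
  (A U1 V1 U2 V2 : 'M[R]_(m, n)) (Ad U1d U2d : 'M[R]_(n, m)) (alpha : R) :
  is_MPinv A Ad -> mx_nonneg Ad ->
  is_MPinv U1 U1d -> is_MPinv U2 U2d ->
  proper_splitting A U1 V1 -> proper_splitting A U2 V2 ->
  convergent_splitting U1 V1 U1d -> convergent_splitting U2 V2 U2d ->
  ((type_I U1 V1 U1d /\ type_I U2 V2 U2d) \/
   (type_II U1 V1 U1d /\ type_II U2 V2 U2d)) ->
  0 < alpha -> alpha <= 1 ->
  mx_le V1 (alpha *: V2) ->
  (0 < spectral_radius (Ad *m V1) \/ 0 < spectral_radius (Ad *m V2)) ->
  (alpha = 1 ->
     spectral_radius (U1d *m V1) <= spectral_radius (U2d *m V2) /\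
     spectral_radius (U2d *m V2) < 1) /\
  (alpha < 1 ->
     spectral_radius (U1d *m V1) < spectral_radius (U2d *m V2) /\
     spectral_radius (U2d *m V2) < 1).
Proof.
move=> HA Ad_ge0 HU1 HU2 S1 S2 C1 C2 types a_gt0 a_le1 V12 B_pos.
suff [le12 lt12] : spectral_radius (U1d *m V1) <= spectral_radius (U2d *m V2) /\
    (alpha < 1 -> spectral_radius (U1d *m V1) < spectral_radius (U2d *m V2)).
  by split=> [_|/lt12]; split.
case: types => [[T1 T2]|[T1 T2]].
  apply: neumann_pairs_compare T1 T2 C1 C2 (proper_splitting_neumann_l HA HU1 S1)
    (proper_splitting_neumann_l HA HU2 S2) a_gt0 a_le1 _ B_pos.
  by rewrite scalemxAr; apply: mx_le_mull.
rewrite /convergent_splitting !(spectral_radius_mulmxC _ V1)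
  !(spectral_radius_mulmxC _ V2) in C1 C2 B_pos *.
apply: neumann_pairs_compare T1 T2 C1 C2 (proper_splitting_neumann_r HA HU1 S1)
  (proper_splitting_neumann_r HA HU2 S2) a_gt0 a_le1 _ B_pos.
by rewrite scalemxAl; apply: mx_le_mulr.
Qed.
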